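(* Let $\Omega\subset\mathbb{R}^n$ be a convex open set, let $f:\Omega\to\mathbb{R}$ be bounded, and let $\lambda>0$. Let $\underline f:\overline\Omega\to\mathbb{R}$ be given by $\underline f(x)=\liminf_{y\to x,\,y\in\Omega}f(y)$. Then for every $x\in\Omega$, $$C^l_{\lambda,\Omega}(f^{-}_{\overline\Omega})(x)\le C^l_{\lambda,\Omega}(f)(x)\le C^l_\lambda(f^\infty)(x)\le \underline f(x)\le f(x).$$
   Context: $f^{-}_{\overline\Omega}:\overline\Omega\to\mathbb{R}$ equals $f$ on $\Omega$ and $\inf_\Omega f$ on $\partial\Omega$. $f^\infty:\mathbb{R}^n\to\mathbb{R}\cup\{+\infty\}$ equals $f$ on $\Omega$ and $+\infty$ on $\mathbb{R}^n\setminus\Omega$. For a bounded function $g$ on $\overline\Omega$ and $x\in\overline\Omega$: $M_{\lambda,\Omega}(g)(x)=\inf_{y\in\overline\Omega}\{g(y)+\lambda|y-x|^2\}$, $M^{\lambda}_{\Omega}(g)(x)=\sup_{y\in\overline\Omega}\{g(y)-\lambda|y-x|^2\}$; for $f$ defined only on $\Omega$, $M_{\lambda,\Omega}(f)(x)=\inf_{y\in\Omega}\{f(y)+\lambda|y-x|^2\}$. Local lower transform: $C^l_{\lambda,\Omega}(g)(x)=M^{\lambda}_{\Omega}(M_{\lambda,\Omega}(g))(x)$ for $x\in\overline\Omega$. Global lower transform: $C^l_\lambda(g)(x)=\mathrm{co}[g+\lambda|\cdot|^2](x)-\lambda|x|^2$, where $\mathrm{co}$ is the convex envelope (largest convex function,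 possibly $+\infty$-valued, below the given function). *)

(* Points of R^n are row vectors 'rV[R]_n, with the
   library topology (equivalent to the Euclidean one); |y - x|^2 is the
   squared Euclidean norm written out explicitly. *)
From HB Require Import structures.
From mathcomp Require Import all_boot all_order all_algebra.
From mathcomp Require Import all_classical all_reals all_analysis.
Set Implicit Arguments. Unset Strict Implicit. Unset Printing Implicit Defensive.
Import Order.TTheory GRing.Theory Num.Theory.
Import numFieldNormedType.Exports.
Local Open Scope classical_set_scope.
Local Open Scope ring_scope.

Section Defs.
Variables (R : realType) (n : nat).
Local Notation V := 'rV[R]_n.

Definition sqnorm (v : V) : R := \sum_(i < n) (v ord0 i) ^+ 2.

Definition edist (x y : V) : R := Num.sqrt (sqnorm (y - x)).

Definition Minf (lam : R) (A : set V) (g : V -> R) (x : V) : R :=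
  inf [set g y + lam * sqnorm (y - x) | y in A].

Definition Msup (lam : R) (A : set V) (g : V -> R) (x : V) : R :=
  sup [set g y - lam * sqnorm (y - x) | y in A].

(* local lower transform: C^l_{lam,Omega}(g) = M^lam_Omega (M_{lam,Omega} g);
   the inner infimum runs over the domain D of g (D = closure Omega for a
   function on closure Omega, D = Omega for f defined on Omega only), the outer
   supremum over closure Omega. *)
Definition lower_local (lam : R) (Omega D : set V) (g : V -> R) (x : V) : R :=
  Msup lam (closure Omega) (Minf lam D g) x.

Definition fminus (Omega : set V) (f : V -> R) : V -> R :=
  fun y => if `[< Omega y >] then f y else inf (f @` Omega).

Definition finfty (Omega : set V) (f : V -> R) : V -> \bar R :=
  fun y => if `[< Omega y >] then (f y)%:E else +oo%E.

Definition econvex (h : V -> \bar R) : Prop :=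
  (forall x, h x != -oo%E) /\
  forall (x y : V) (t : R), 0 < t < 1 ->
    (h ((t *: x + (1 - t) *: y)%R) <= t%:E * h x + (1 - t)%:E * h y)%E.

Definition conv_env (F : V -> \bar R) (x : V) : \bar R :=
  ereal_sup [set h x | h in [set h | econvex h /\ forall y, (h y <= F y)%E]].

Definition lower_global (lam : R) (g : V -> \bar R) (x : V) : \bar R :=
  (conv_env (fun y => g y + (lam * sqnorm y)%:E) x - (lam * sqnorm x)%:E)%E.

(* liminf_{y -> x, y in Omega} f(y)  (y = x allowed) *)
Definition liminf_in (Omega : set V) (f : V -> R) (x : V) : R :=
  sup [set inf [set f y | y in [set y | Omega y /\ edist x y < r]]
      | r in [set r : R | 0 < r]].

End Defs.

(* For the first inequality, the inner infimum of the closure transform runs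
   over the larger set closure Omega, on which f^- still agrees with f on Omega.
   For the second, every y yields the affine function
   w |-> M_lam(f)(y) - lam |w - y|^2 + lam |w|^2, which lies below
   f^oo + lam |.|^2 and hence below its convex envelope.  For the third, let h
   be convex and below f^oo + lam |.|^2; for y in Omega near x and 0 < t < 1
   write x = t z + (1 - t) y with z = x + ((1 - t) / t) (x - y), still in Omega
   because Omega is open.  The identity
   t |z|^2 + (1 - t) |y|^2 = |x|^2 + ((1 - t) / t) |y - x|^2 turns convexity of
   h into h(x) - lam |x|^2 <= f(y) + 2 t M + lam ((1 - t) / t) |y - x|^2, which
   is f(y) + o(1) when first t -> 0 and then y -> x. *)
From Pilot Require Import Defs.
From HB Require Import structures.
From mathcomp Require Import all_boot all_order all_algebra.
From mathcomp Require Import all_classical all_reals all_analysis.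
From mathcomp Require Import ring lra.
Import Order.TTheory GRing.Theory Num.Theory.
Import numFieldNormedType.Exports.
Local Open Scope classical_set_scope.
Local Open Scope ring_scope.

Set Implicit Arguments.
Unset Strict Implicit.

Section Sqnorm.
Variables (R : realType) (n : nat).
Local Notation V := 'rV[R]_n.

Lemma sqnorm_ge0 (v : V) : 0 <= sqnorm v.
Proof. by apply: sumr_ge0 => i _; exact: sqr_ge0. Qed.

Lemma sqnormBC (x y : V) : sqnorm (x - y) = sqnorm (y - x).
Proof. by apply: eq_bigr => i _; rewrite !mxE; ring. Qed.

Lemma edistxx (x : V) : Defs.edist x x = 0.
Proof.
rewrite /Defs.edist subrr /sqnorm big1 ?sqrtr0 // => i _.
by rewrite mxE expr0n.
Qed.

Lemma edist_lt_sqnorm (x y : V) (r : R) :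
  Defs.edist x y < r -> sqnorm (y - x) < r ^+ 2.
Proof.
rewrite /Defs.edist => lt_r; rewrite -(sqr_sqrtr (sqnorm_ge0 (y - x))).
by rewrite ltr_pXn2r ?nnegrE ?sqrtr_ge0 ?(le_trans (sqrtr_ge0 _) (ltW lt_r)).
Qed.

Lemma edist_lt_entry (x y : V) (r : R) i :
  Defs.edist x y < r -> `|y ord0 i - x ord0 i| < r.
Proof.
apply: le_lt_trans; rewrite /Defs.edist -sqrtr_sqr ler_sqrt ?sqnorm_ge0 //.
rewrite /sqnorm (bigD1 i) //= !mxE lerDl.
by apply: sumr_ge0 => j _; exact: sqr_ge0.
Qed.

Lemma sqnorm_shift_affine (a b y : V) (t : R) :
  sqnorm (t *: a + (1 - t) *: b) - sqnorm (t *: a + (1 - t) *: b - y)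
  = t * (sqnorm a - sqnorm (a - y)) + (1 - t) * (sqnorm b - sqnorm (b - y)).
Proof.
rewrite /sqnorm -!sumrB !mulr_sumr -big_split /=.
by apply: eq_bigr => i _; rewrite !mxE; ring.
Qed.

Definition beyond (t : R) (y x : V) : V := x + ((1 - t) / t) *: (x - y).

Lemma beyond_comb (t : R) (y x : V) : t != 0 ->
  x = t *: beyond t y x + (1 - t) *: y.
Proof. by move=> t0; apply/rowP => i; rewrite !mxE; field. Qed.

Lemma sqnorm_beyond_comb (t : R) (y x : V) : t != 0 ->
  t * sqnorm (beyond t y x) + (1 - t) * sqnorm y
  = sqnorm x + ((1 - t) / t) * sqnorm (y - x).
Proof.
move=> t0; rewrite /sqnorm !mulr_sumr -!big_split /=.
by apply: eq_bigr => i _; rewrite !mxE; field.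
Qed.

Lemma beyond_near_open (Omega : set V) (x : V) (t : R) :
  open Omega -> Omega x -> 0 < t < 1 ->
  exists2 r : R, 0 < r & forall y, Defs.edist x y < r -> Omega (beyond t y x).
Proof.
move=> oOmega Ox /andP[t0 t1].
have /nbhs_ballP[d d0 ballOmega] := oOmega x Ox.
exists (t * d) => [|y lt_xy]; first exact: mulr_gt0.
apply: ballOmega; split=> // i j; rewrite (ord1 i) /ball /= !mxE.
rewrite opprD addrA subrr add0r normrN normrM.
rewrite ger0_norm ?divr_ge0 ?subr_ge0 ?ltW //.
rewrite -ltr_pdivlMl ?divr_gt0 ?subr_gt0 // distrC invf_div.
apply: lt_le_trans (edist_lt_entry j lt_xy) _.
rewrite mulrAC ler_pdivlMr ?subr_gt0 // ger_pMr ?mulr_gt0 //.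
by rewrite gerBl ltW.
Qed.

End Sqnorm.

Section Transforms.
Variables (R : realType) (n : nat).
Local Notation V := 'rV[R]_n.
Implicit Types (lam c : R) (A B : set V) (g h : V -> R) (x y : V).

Lemma Minf_le_at lam A g c x y : 0 <= lam ->
  (forall w, A w -> c <= g w) -> A y ->
  Minf lam A g x <= g y + lam * sqnorm (y - x).
Proof.
move=> lam_ge0 g_ge Ay; apply: ge_inf; last by exists y.
exists c => _ [w Aw <-]; apply: le_trans (g_ge w Aw) _.
by rewrite lerDl mulr_ge0 ?sqnorm_ge0.
Qed.

Lemma Minf_le_Minf lam A B g h c x : 0 <= lam -> A `<=` B -> A !=set0 ->
  (forall w, B w -> c <= g w) -> (forall w, A w -> g w = h w) ->
  Minf lam B g x <= Minf lam A h x.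
Proof.
move=> lam_ge0 AB [y Ay] g_ge gh.
apply: lb_le_inf; first by exists (h y + lam * sqnorm (y - x)), y.
by move=> _ [w Aw <-]; rewrite -gh //; exact/(Minf_le_at _ lam_ge0 g_ge)/AB.
Qed.

Lemma Msup_le_Msup lam A g h x : A !=set0 -> (forall w, A w -> g w <= h w) ->
  has_ubound [set h w - lam * sqnorm (w - x) | w in A] ->
  Msup lam A g x <= Msup lam A h x.
Proof.
move=> [y Ay] gh h_ub.
apply: ge_sup; first by exists (g y - lam * sqnorm (y - x)), y.
move=> _ [w Aw <-]; apply: le_trans (ub_le_sup h_ub _); last by exists w.
by rewrite lerD2r gh.
Qed.

Lemma fminus_id A g y : A y -> fminus A g y = g y.
Proof. by move=> Ay; rewrite /fminus asboolT. Qed.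

Lemma fminus_ge A g c : A !=set0 -> (forall w, A w -> c <= g w) ->
  forall y, c <= fminus A g y.
Proof.
move=> [x Ax] g_ge y; rewrite /fminus; case: asboolP => [/g_ge//|_].
by apply: lb_le_inf; [exists (g x), x | move=> _ [w Aw <-]; exact: g_ge].
Qed.

Lemma conv_env_ge (F k : V -> \bar R) x :
  econvex k -> (forall y, (k y <= F y)%E) -> (k x <= conv_env F x)%E.
Proof. by move=> k_conv k_le; apply: ereal_sup_ubound; exists k. Qed.

Lemma econvex_le_comb (F k : V -> \bar R) (t : R) (y z : V) :
  econvex k -> (forall w, (k w <= F w)%E) -> 0 < t < 1 ->
  (k ((t *: z + (1 - t) *: y)%R) <= t%:E * F z + (1 - t)%:E * F y)%E.
Proof.
move=> [_ k_conv] k_le t01; apply: le_trans (k_conv z y t t01) _.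
have /andP[t0 t1] := t01.
by apply: leeD; apply: lee_wpmul2l; rewrite ?k_le ?lee_fin ?subr_ge0 ?ltW.
Qed.

Definition affine_minorant lam (m : R) y : V -> \bar R :=
  fun w => (m - lam * sqnorm (w - y) + lam * sqnorm w)%:E.

Lemma econvex_affine_minorant lam m y : econvex (affine_minorant lam m y).
Proof.
split=> // a b t _; rewrite /affine_minorant -!EFinM -EFinD lee_fin.
have := congr1 (fun v => lam * v) (sqnorm_shift_affine a b y t) => /= shift.
lra.
Qed.

End Transforms.

Lemma sup_le_ereal (R : realType) (E : set R) (e : \bar R) :
  E !=set0 -> (forall r, E r -> (r%:E <= e)%E) -> ((sup E)%:E <= e)%E.
Proof.
move=> [r Er] E_le; case: e E_le => [e| |] E_le; last 2 first.
- by rewrite leey.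
- by have := E_le r Er.
by rewrite lee_fin; apply: ge_sup; [exists r | move=> s /E_le; rewrite lee_fin].
Qed.

Section BoundedFunction.
Variables (R : realType) (n : nat) (Omega : set 'rV[R]_n) (f : 'rV[R]_n -> R).
Variables (M lam : R).
Hypothesis f_bounded : forall y, Omega y -> `|f y| <= M.
Hypothesis lam_gt0 : 0 < lam.
Local Notation V := 'rV[R]_n.
Implicit Types (x y : V).

Let lam_ge0 : 0 <= lam. Proof. exact: ltW. Qed.

Lemma bounded_ge y : Omega y -> - M <= f y.
Proof. by move/f_bounded; rewrite ler_norml => /andP[]. Qed.

Lemma bounded_le y : Omega y -> f y <= M.
Proof. by move/f_bounded; rewrite ler_norml => /andP[]. Qed.

Lemma Minf_sub_le x y : Omega x ->
  Minf lam Omega f y - lam * sqnorm (y - x) <= f x.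
Proof.
move=> Ox; rewrite lerBlDr sqnormBC.
exact: (Minf_le_at _ lam_ge0 bounded_ge).
Qed.

Lemma lower_local_closure_le x : Omega x ->
  lower_local lam Omega (closure Omega) (fminus Omega f) x
    <= lower_local lam Omega Omega f x.
Proof.
move=> Ox; have Omega0 : Omega !=set0 by exists x.
apply: Msup_le_Msup; first by exists x; exact: subset_closure.
  move=> w _; apply: (Minf_le_Minf (c := - M)) => //.
  - exact: subset_closure.
  - by move=> y _; exact: (fminus_ge Omega0 bounded_ge y).
  - by move=> y; exact: fminus_id.
by exists (f x) => _ [y _ <-]; exact: Minf_sub_le.
Qed.

Lemma affine_minorant_le_finfty y w :
  (affine_minorant lam (Minf lam Omega f y) y w
    <= finfty Omega f w + (lam * sqnorm w)%:E)%E.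
Proof.
rewrite /finfty; case: asboolP => Ow; last by rewrite leey.
rewrite /affine_minorant -EFinD lee_fin lerD2r lerBlDr.
exact: (Minf_le_at _ lam_ge0 bounded_ge).
Qed.

Lemma Minf_sub_le_lower_global x y :
  ((Minf lam Omega f y - lam * sqnorm (y - x))%:E
    <= lower_global lam (finfty Omega f) x)%E.
Proof.
rewrite /lower_global leeBrDr // -EFinD.
apply: le_trans (conv_env_ge _ (econvex_affine_minorant _ _ _)
                   (affine_minorant_le_finfty y)).
by rewrite /affine_minorant sqnormBC.
Qed.

Lemma lower_local_le_lower_global x : Omega x ->
  ((lower_local lam Omega Omega f x)%:E
    <= lower_global lam (finfty Omega f) x)%E.
Proof.
move=> Ox; apply: sup_le_ereal.
  by eexists; exists x => //; exact: subset_closure.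
by move=> _ [y _ <-]; exact: Minf_sub_le_lower_global.
Qed.

Lemma inf_ball_le x (r : R) : Omega x -> 0 < r ->
  inf [set f y | y in [set y | Omega y /\ Defs.edist x y < r]] <= f x.
Proof.
move=> Ox r_gt0; apply: ge_inf; last by exists x => //; split; rewrite ?edistxx.
by exists (- M) => _ [y [Oy _] <-]; exact: bounded_ge.
Qed.

Lemma liminf_in_le x : Omega x -> liminf_in Omega f x <= f x.
Proof.
move=> Ox; apply: ge_sup; first by eexists; exists 1; rewrite /= ?ltr01.
by move=> _ [r r_gt0 <-]; exact: inf_ball_le.
Qed.

Lemma le_liminf_in x (c : R) : Omega x ->
  (forall e, 0 < e -> exists2 r : R, 0 < r &
     forall y, Omega y -> Defs.edist x y < r -> c - e <= f y) ->
  c <= liminf_in Omega f x.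
Proof.
move=> Ox near_ge; apply/ler_addgt0Pr => e e_gt0.
have [r r_gt0 ball_ge] := near_ge e e_gt0.
rewrite -lerBlDr.
pose ball := [set y | Omega y /\ Defs.edist x y < r].
apply: (@le_trans _ _ (inf (f @` ball))).
  apply: lb_le_inf; first by exists (f x), x => //; split; rewrite ?edistxx.
  by move=> _ [y [Oy lt_xy] <-]; exact: ball_ge.
apply: ub_le_sup; last by exists r.
by exists (f x) => _ [s s_gt0 <-]; exact: inf_ball_le.
Qed.

Lemma beyond_comb_estimate x y (t hx : R) :
  0 < t < 1 -> Omega y -> Omega (beyond t y x) ->
  hx <= t * (f (beyond t y x) + lam * sqnorm (beyond t y x))
        + (1 - t) * (f y + lam * sqnorm y) ->
  hx - lam * sqnorm x <= f y + 2 * t * M + lam * ((1 - t) / t * sqnorm (y - x)).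
Proof.
move=> /andP[t_gt0 t_lt1] Oy Oz hx_le.
have t_neq0 := lt0r_neq0 t_gt0.
have := congr1 (fun v => lam * v) (sqnorm_beyond_comb y x t_neq0) => /= id.
have fz_le : t * f (beyond t y x) <= t * M.
  by apply: ler_wpM2l; [exact: ltW | exact: bounded_le].
have fy_ge : t * - M <= t * f y.
  by apply: ler_wpM2l; [exact: ltW | exact: bounded_ge].
nra.
Qed.

Lemma convex_bound_le_liminf_in x (hx : R) : open Omega -> Omega x ->
  (forall y z t, Omega y -> Omega z -> 0 < t < 1 -> x = t *: z + (1 - t) *: y ->
     hx <= t * (f z + lam * sqnorm z) + (1 - t) * (f y + lam * sqnorm y)) ->
  hx - lam * sqnorm x <= liminf_in Omega f x.
Proof.
move=> oOmega Ox hx_le; apply: le_liminf_in => // e e_gt0.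
have M_ge0 : 0 <= M by apply: le_trans (f_bounded Ox).
pose t := Num.min (1 / 2) (e / (4 * (M + 1))).
have t_gt0 : 0 < t.
  by rewrite lt_min; apply/andP; split; [lra | apply: divr_gt0 => //; lra].
have t01 : 0 < t < 1 by rewrite t_gt0 /= gt_min; apply/orP; left; lra.
have tM_le : 2 * t * M <= e / 2.
  have : t * (4 * (M + 1)) <= e.
    by rewrite -ler_pdivlMr ?ge_min ?lexx ?orbT //; lra.
  nra.
have [r1 r1_gt0 near_beyond] := beyond_near_open oOmega Ox t01.
pose r := Num.min r1 (Num.min 1 (e * t / (2 * lam))).
have r_gt0 : 0 < r by rewrite !lt_min r1_gt0 ltr01 !divr_gt0 ?mulr_gt0.
exists r => // y Oy lt_xy.
have Oz : Omega (beyond t y x).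
  by apply: near_beyond; apply: lt_le_trans lt_xy _; rewrite ge_min lexx.
have := beyond_comb_estimate t01 Oy Oz
  (hx_le y _ t Oy Oz t01 (beyond_comb y x (lt0r_neq0 t_gt0))).
suff : lam * ((1 - t) / t * sqnorm (y - x)) <= e / 2 by lra.
have r_le1 : r <= 1 by rewrite !ge_min lexx orbT.
have r_le : r <= e * t / (2 * lam) by rewrite !ge_min lexx !orbT.
have sq_le : lam * sqnorm (y - x) <= e * t / 2.
  have q_le : sqnorm (y - x) <= r.
    apply: ltW; apply: lt_le_trans (edist_lt_sqnorm lt_xy) _.
    by rewrite expr2 ger_pMr.
  have := ler_wpM2l lam_ge0 q_le; move: r_le; rewrite ler_pdivlMr ?mulr_gt0 //.
  lra.
have s_ge0 : 0 <= (1 - t) / t.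
  by rewrite divr_ge0 // ltW // subr_gt0 (andP t01).2.
rewrite mulrCA; apply: le_trans (ler_wpM2l s_ge0 sq_le) _.
have -> : (1 - t) / t * (e * t / 2) = (1 - t) * (e / 2).
  by field; exact: lt0r_neq0.
by rewrite ger_pMl ?divr_gt0 // gerBl ltW.
Qed.

Lemma lower_global_le_liminf_in x : open Omega -> Omega x ->
  (lower_global lam (finfty Omega f) x <= (liminf_in Omega f x)%:E)%E.
Proof.
move=> oOmega Ox; rewrite /lower_global leeBlDr // -EFinD.
apply: ge_ereal_sup => _ [k [k_conv k_le] <-].
have finfty_id w : Omega w ->
    (finfty Omega f w + (lam * sqnorm w)%:E)%E = (f w + lam * sqnorm w)%:E.
  by move=> Ow; rewrite /finfty asboolT.
have := k_le x; rewrite finfty_id //.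
case kx: (k x) => [hx| |] //; last by have := k_conv.1 x; rewrite kx.
move=> _; rewrite lee_fin -lerBlDr.
apply: convex_bound_le_liminf_in => // y z t Oy Oz t01 x_comb.
rewrite -lee_fin -kx x_comb.
apply: le_trans (econvex_le_comb y z k_conv k_le t01) _.
by rewrite !finfty_id // -!EFinM -EFinD.
Qed.

End BoundedFunction.

Unset Implicit Arguments.

Theorem proposition2p9 (R : realType) (n : nat) (Omega : set 'rV[R]_n)
    (f : 'rV[R]_n -> R) (lam : R) :
  open Omega ->
  convex_set (Omega : set (convex_lmodType 'rV[R]_n)) ->
  (exists M : R, forall y, Omega y -> `|f y| <= M) ->
  0 < lam ->
  forall x, Omega x ->
    lower_local lam Omega (closure Omega) (fminus Omega f) x
      <= lower_local lam Omega Omega f x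
    /\ ((lower_local lam Omega Omega f x)%:E
          <= lower_global lam (finfty Omega f) x)%E
    /\ (lower_global lam (finfty Omega f) x <= (liminf_in Omega f x)%:E)%E
    /\ liminf_in Omega f x <= f x.
Proof.
move=> oOmega _ [M f_bounded] lam_gt0 x Ox; split; [|split; [|split]].
- exact: lower_local_closure_le f_bounded lam_gt0 x Ox.
- exact: lower_local_le_lower_global f_bounded lam_gt0 x Ox.
- exact: lower_global_le_liminf_in f_bounded lam_gt0 x oOmega Ox.
- exact: liminf_in_le f_bounded x Ox.
Qed.
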